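(* Let $q\in\mathbb{C}$, $|q|<1$, $\mathbf{s}=(s_1,\dots,s_d)\in\mathbb{N}^d$ and $\mathbf{a}=(a_1,\dots,a_d)\in\mathbb{Z}_{\ge0}^d$, and put $w=s_1+\dots+s_d$. Let $$F(t)=\mathbf{R}^{a_1}\Big[\mathbf{P}^{s_1-a_1}\big[\mathbf{y}\,\mathbf{R}^{a_2}[\mathbf{P}^{s_2-a_2}[\mathbf{y}\cdots\mathbf{R}^{a_d}[\mathbf{P}^{s_d-a_d}[\mathbf{y}]]\cdots]]\big]\Big](t).$$ If $a_1+\dots+a_j>0$ for all $j=1,\dots,d$, then $\zeta_q^{\mathbf{a}}[\mathbf{s}]=(1-q)^wF(1)$ and $\mathfrak{z}_q^{\mathbf{a}}[\mathbf{s}]=F(1)$.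
   Context: $\mathfrak{z}_q^{\mathbf{t}}[\mathbf{s}]=\sum_{k_1>\dots>k_d>0}\prod_{j}\frac{q^{k_jt_j}}{(1-q^{k_j})^{s_j}}$ and $\zeta_q^{\mathbf{t}}[\mathbf{s}]=(1-q)^{|\mathbf{s}|}\mathfrak{z}_q^{\mathbf{t}}[\mathbf{s}]$. Operators on power series $f(t)$ without constant term in $t$: $\mathbf{P}[f](t)=\sum_{k\ge0}f(q^kt)$, $\mathbf{R}[f](t)=\sum_{k\ge1}f(q^kt)$, $\mathbf{D}[f](t)=f(t)-f(qt)$; $\mathbf{P}^m$ is the $m$-fold composition of $\mathbf{P}$ for $m\ge0$ and $\mathbf{P}^m:=\mathbf{D}^{-m}$ for $m<0$; $\mathbf{y}$ denotes multiplication by $\mathbf{y}(t)=\frac{t}{1-t}$ (and the innermost $\mathbf{y}$ is the function $\mathbf{y}(t)$ itself). $F(1)$ is the value at $t=1$. *)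

From HB Require Import structures.
From mathcomp Require Import all_boot all_order all_algebra.
From mathcomp Require Import all_classical all_reals all_analysis.
From mathcomp Require Import complex.
Set Implicit Arguments.
Unset Strict Implicit.
Unset Printing Implicit Defensive.
Import Order.TTheory GRing.Theory Num.Theory.
Import numFieldNormedType.Exports.
Local Open Scope classical_set_scope.
Local Open Scope ring_scope.

(* The complex numbers C = R[i], viewed as a numClosedFieldType so that
   MathComp-Analysis's normed/topological structure applies. *)
Definition Cplx (R : realType) : numClosedFieldType := R[i].

Section QMZV.
Context {R : realType}.
Local Notation C := (Cplx R).

Definition csum_from (m : nat) (u : nat -> C) : C :=
  limn (fun n => \sum_(m <= k < n) u k).

Definition zterm (q : C) (k s t : nat) : C :=
  (q ^+ k) ^+ t / (1 - q ^+ k) ^+ s.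

(* zinner q b [:: (s_j,t_j); ...; (s_d,t_d)] =
     sum_{b > k_j > ... > k_d > 0} prod_i zterm q k_i s_i t_i  (finite sum) *)
Fixpoint zinner (q : C) (b : nat) (st : seq (nat * nat)) : C :=
  match st with
  | [::] => 1
  | (s, t) :: st' => \sum_(1 <= k < b) zterm q k s t * zinner q k st'
  end.

(* frak z_q^t[s] = sum_{k_1 > ... > k_d > 0} prod_j q^{k_j t_j}/(1-q^{k_j})^{s_j},
   summed with k_1 outermost (inner sums are finite). *)
Definition zfrak (q : C) (t s : seq nat) : C :=
  match zip s t with
  | [::] => 1
  | (s1, t1) :: st' => csum_from 1 (fun k => zterm q k s1 t1 * zinner q k st')
  end.

Definition zetaq (q : C) (t s : seq nat) : C :=
  (1 - q) ^+ (\sum_(x <- s) x)%N * zfrak q t s.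

(* A formal power series f(t) = sum_n f n t^n is its coefficient sequence. *)
Definition fps := nat -> C.

(* f(q^k t) has coefficients f n * (q^k)^n. *)
(* P[f](t) = sum_{k>=0} f(q^k t)  (coefficientwise sum) *)
Definition Pop (q : C) (f : fps) : fps :=
  fun n => csum_from 0 (fun k => f n * (q ^+ k) ^+ n).
(* R[f](t) = sum_{k>=1} f(q^k t) *)
Definition Rop (q : C) (f : fps) : fps :=
  fun n => csum_from 1 (fun k => f n * (q ^+ k) ^+ n).
(* D[f](t) = f(t) - f(q t) *)
Definition Dop (q : C) (f : fps) : fps :=
  fun n => f n - f n * q ^+ n.

(* P^m for m : int ; P^m := D^{-m} for m < 0 *)
Definition Ppow (q : C) (m : int) (f : fps) : fps :=
  match m with
  | Posz k => iter k (Pop q) f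
  | Negz k => iter k.+1 (Dop q) f
  end.

Definition Rpow (q : C) (a : nat) (f : fps) : fps := iter a (Rop q) f.

(* y(t) = t/(1-t) = sum_{n>=1} t^n *)
Definition yps : fps := fun n => (n != 0%N)%:R.

Definition ymul (f : fps) : fps :=
  fun n => \sum_(i < n.+1) yps i * f (n - i)%N.

(* Fnest q [:: (s_1,a_1); ...; (s_d,a_d)] =
   R^{a_1}[P^{s_1-a_1}[y R^{a_2}[P^{s_2-a_2}[y ... R^{a_d}[P^{s_d-a_d}[y]]...]]]] *)
Fixpoint Fnest (q : C) (sa : seq (nat * nat)) : fps :=
  match sa with
  | [::] => yps
  | (s, a) :: sa' =>
      Rpow q a (Ppow q (s%:Z - a%:Z)
        (match sa' with [::] => yps | _ => ymul (Fnest q sa') end))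
  end.

(* F(1): value at t = 1 of the power series, i.e. sum of its coefficients *)
Definition ps_at1 (F : fps) : C := csum_from 0 F.

End QMZV.

(* For n >= 1 the operators act on the n-th coefficient by multiplication:
   P by 1/(1-q^n), R by q^n/(1-q^n) and D by 1-q^n, while multiplication by y
   turns a series into its sequence of partial sums.  Hence the n-th
   coefficient of F is q^(n a_1)/(1-q^n)^(s_1) times the finite nested sum over
   n > k_2 > ... > k_d > 0, and F(1) is term by term the series defining
   z_q^a[s].  For convergence, the inner finite sums are O(x^n) for any x > 1,
   so a_1 >= 1 makes the n-th coefficient O((|q| x)^n); any 1 < x < 1/|q| then
   gives a geometric majorant. *)

From HB Require Import structures.
From mathcomp Require Import all_boot all_order all_algebra.
From mathcomp Require Import all_classical all_reals all_analysis.
From mathcomp Require Import complex.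
From mathcomp Require Import ring.
Import Order.TTheory GRing.Theory Num.Theory.
Import numFieldNormedType.Exports.
Local Open Scope classical_set_scope.
Local Open Scope ring_scope.

Section ComplexSeries.
Context {R : realType}.
Local Notation C := (Cplx R).

Lemma normcE (z : C) : `|z| = (Normc.normc z)%:C%C.
Proof. by []. Qed.

Lemma ge0_complexE {z : C} : 0 <= z -> z = (complex.Re z)%:C%C.
Proof. by rewrite lecE => /andP[/eqP Im0 _]; case: z Im0 => a b /= ->. Qed.

Lemma Re_norm_le (z : C) : `|complex.Re z| <= Normc.normc z.
Proof.
case: z => a b; rewrite /Normc.normc /= -sqrtr_sqr; apply: ler_wsqrtr.
by rewrite lerDl sqr_ge0.
Qed.

Lemma Im_norm_le (z : C) : `|complex.Im z| <= Normc.normc z.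
Proof.
case: z => a b; rewrite /Normc.normc /= -sqrtr_sqr; apply: ler_wsqrtr.
by rewrite lerDr sqr_ge0.
Qed.

Lemma normc_le_ReIm (z : C) : Normc.normc z <= `|complex.Re z| + `|complex.Im z|.
Proof.
case: z => a b; rewrite /Normc.normc /=.
rewrite -[X in _ <= X]ger0_norm ?addr_ge0 // -sqrtr_sqr; apply: ler_wsqrtr.
rewrite sqrrD !real_normK ?num_real // -addrA [_ *+ 2 + _]addrC addrA.
by rewrite lerDl mulrn_wge0 // mulr_ge0.
Qed.

Lemma Re_series (u : nat -> C) n :
  complex.Re (series u n) = series (fun k => complex.Re (u k)) n.
Proof. exact: (@raddf_sum _ _ (@complex.Re R : Rcomplex R -> R)). Qed.

Lemma Im_series (u : nat -> C) n :
  complex.Im (series u n) = series (fun k => complex.Im (u k)) n.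
Proof. exact: (@raddf_sum _ _ (@complex.Im R : Rcomplex R -> R)). Qed.

Lemma cvgC_dominated (u : nat -> C) (l : C) (b : nat -> R) :
  b @ \oo --> 0 -> (\forall n \near \oo, `|u n - l| <= (b n)%:C%C) ->
  u @ \oo --> l.
Proof.
move=> b0 ub; apply/cvgrPdist_lt => e e_gt0.
have eE := ge0_complexE (ltW e_gt0).
move: e_gt0; rewrite {1}eE ltcR => Re_gt0.
move/cvgrPdist_lt : b0 => /(_ _ Re_gt0) bn.
near=> n; rewrite distrC; apply: (@le_lt_trans _ _ (b n)%:C%C); first by near: n.
rewrite [X in _ < X]eE ltcR; apply: le_lt_trans (ler_norm _) _.
by rewrite -normrN -(sub0r (b n)); near: n.
Unshelve. all: by end_near. Qed.

(* R[i] has no complete normed space instance, so limits of complex series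
   are obtained componentwise from the completeness of R. *)
Lemma cvgC_ReIm (u : nat -> C) (lr li : R) :
  (fun n => complex.Re (u n)) @ \oo --> lr ->
  (fun n => complex.Im (u n)) @ \oo --> li ->
  u @ \oo --> ((lr +i* li)%C : C).
Proof.
move=> Re_cvg Im_cvg.
apply: (@cvgC_dominated _ _ (fun n => `|complex.Re (u n) - lr| + `|complex.Im (u n) - li|)).
  have dist_cvg0 (f : nat -> R) l : f @ \oo --> l -> `|f n - l| @[n --> \oo] --> 0.
    move=> f_cvg; rewrite -(@normr0 _ R) -(subrr l).
    by apply: cvg_norm; apply: cvgB => //; exact: cvg_cst.
  by rewrite -[0 : R]addr0; apply: cvgD; apply: dist_cvg0.
near=> n; rewrite lecR; apply: le_trans (normc_le_ReIm _) _.
by case: (u n) => a b.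
Unshelve. all: by end_near. Qed.

Lemma series_dominated_cvgC (u : nat -> C) (b : nat -> R) :
  (forall k, `|u k| <= (b k)%:C%C) -> cvgn (series b) -> cvgn (series u).
Proof.
move=> ub b_cvg.
have b_ge0 k : 0 <= b k by rewrite -lecR; exact: le_trans (normr_ge0 _) (ub k).
have part_cvg (p : C -> R) : (forall z, `|p z| <= Normc.normc z) ->
    cvgn (series (fun k => p (u k))).
  move=> p_le; apply: (@normed_cvg R R^o); apply: (series_le_cvg _ b_ge0 _ b_cvg).
    by move=> n; exact: normr_ge0.
  by move=> n; apply: le_trans (p_le _) _; rewrite -lecR; exact: ub.
apply: (cvgP ((limn (series (fun k => complex.Re (u k)))
                 +i* limn (series (fun k => complex.Im (u k))))%C : C)).
apply: cvgC_ReIm.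
  by under eq_fun do rewrite Re_series; exact: part_cvg Re_norm_le.
by under eq_fun do rewrite Im_series; exact: part_cvg Im_norm_le.
Qed.

Lemma series_geometric_dominated_cvgC {u : nat -> C} {M th : C} :
  0 <= th -> th < 1 -> (forall k, `|u k| <= M * th ^+ k) -> cvgn (series u).
Proof.
move=> th_ge0 th_lt1 ub.
have M_ge0 : 0 <= M by have := ub 0%N; rewrite expr0 mulr1; exact: le_trans.
have MR := ge0_complexE M_ge0; have thR := ge0_complexE th_ge0.
move: th_ge0 th_lt1 ub; rewrite MR thR ler0c ltcR => th_ge0 th_lt1 ub.
apply: (@series_dominated_cvgC _ (geometric (complex.Re M) (complex.Re th))).
  by move=> k; rewrite /= rmorphM rmorphXn; exact: ub.
by apply: is_cvg_geometric_series; rewrite ger0_norm.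
Qed.

Lemma cvg_exprC (x : C) : `|x| < 1 -> x ^+ n @[n --> \oo] --> 0.
Proof.
move=> x_lt1; apply: (@cvgC_dominated _ _ (geometric 1 (Normc.normc x))).
  have nx_ge0 : 0 <= Normc.normc x by rewrite -(@ler0c R) -normcE.
  by apply: cvg_geometric; rewrite ger0_norm // -ltcR; exact: x_lt1.
by apply: nearW => n; rewrite subr0 normrX /= mul1r rmorphXn.
Qed.

Lemma cvg_geometric_sumC (c x : C) m : `|x| < 1 ->
  \sum_(m <= k < n) c * x ^+ k @[n --> \oo] --> c * x ^+ m / (1 - x).
Proof.
move=> x_lt1; have x_neq1 : 1 - x != 0.
  by rewrite subr_eq0; apply: contraTneq x_lt1 => <-; rewrite normr1 ltxx.
have sumE n : (m <= n)%N ->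
    \sum_(m <= k < n) c * x ^+ k = c * (x ^+ m - x ^+ n) / (1 - x).
  move=> le_mn; apply: (mulIf x_neq1); rewrite mulfVK // -mulr_sumr -mulrA mulr_suml.
  rewrite (@telescope_sumr_eq _ m n (fun k => - x ^+ k)) // => [|k _].
    by rewrite opprK addrC.
  by rewrite exprSr; ring.
apply: (@cvg_trans _ ((fun n => c * (x ^+ m - x ^+ n) / (1 - x)) @ \oo)).
  by apply: near_eq_cvg; near=> n; rewrite sumE //; near: n; exists m.
apply: cvgMr_tmp; apply: cvgMl_tmp.
have : x ^+ m - x ^+ n @[n --> \oo] --> x ^+ m - 0.
  by apply: cvgB; [exact: cvg_cst | exact: cvg_exprC].
by rewrite subr0.
Unshelve. all: by end_near. Qed.

Lemma csum_from_geometric (c x : C) m : `|x| < 1 ->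
  csum_from m (fun k => c * x ^+ k) = c * x ^+ m / (1 - x).
Proof. by move=> x_lt1; apply: cvg_lim; [exact: norm_hausdorff | exact: cvg_geometric_sumC]. Qed.

Lemma csum_from0 m : csum_from m (fun=> 0 : C) = 0.
Proof.
rewrite /csum_from; under eq_fun do rewrite big1 //.
exact: (cvg_lim (@norm_hausdorff _ _) (cvg_cst _)).
Qed.

End ComplexSeries.

Lemma series_drop0 (V : zmodType) (u : nat -> V) n :
  u 0%N = 0 -> series u n = \sum_(1 <= k < n) u k.
Proof.
move=> u0; rewrite seriesEnat /=; case: n => [|n]; first by rewrite !big_geq.
by rewrite big_ltn // u0 add0r.
Qed.

Section DiagonalOperator.
Context {R : realType} {T : @fps R -> @fps R} {lam : nat -> Cplx R}.
Hypothesis T_coef : forall f n, (0 < n)%N -> T f n = f n * lam n.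
Hypothesis T_coef0 : forall f, f 0%N = 0 -> T f 0%N = 0.

Lemma iter_diag_coef k f n : (0 < n)%N -> iter k T f n = f n * lam n ^+ k.
Proof.
move=> n_gt0; elim: k => [|k IH] /=; first by rewrite mulr1.
by rewrite T_coef // IH exprSr mulrA.
Qed.

Lemma iter_diag_coef0 k f : f 0%N = 0 -> iter k T f 0%N = 0.
Proof. by move=> f0; elim: k => //= k IH; rewrite T_coef0. Qed.

End DiagonalOperator.

Lemma ymul_series (R : realType) (g : @fps R) : ymul g = series g.
Proof.
apply/funext => n; rewrite /ymul big_ord_recl /= /yps eqxx mul0r add0r.
under eq_bigr do rewrite /bump leq0n add1n /= mul1r.
rewrite -(big_mkord xpredT (fun i => g (n - i.+1)%N)) big_nat_rev seriesEnat /=.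
by apply: eq_big_nat => i /andP[_ lt_in]; rewrite add0n subnSK // subKn // ltnW.
Qed.

Section Operators.
Context {R : realType}.
Local Notation C := (Cplx R).
Variable q : C.
Hypothesis q_lt1 : `|q| < 1.

Lemma norm_qX_lt1 {n} : (0 < n)%N -> `|q ^+ n| < 1.
Proof. by move=> n_gt0; rewrite normrX exprn_ilt1 // -lt0n. Qed.

Lemma onemqX_neq0 {n} : (0 < n)%N -> 1 - q ^+ n != 0.
Proof.
move=> /norm_qX_lt1 qn_lt1; rewrite subr_eq0.
by apply: contraTneq qn_lt1 => <-; rewrite normr1 ltxx.
Qed.

Lemma Pop_coef f n : (0 < n)%N -> Pop q f n = f n * (1 - q ^+ n)^-1.
Proof.
move=> n_gt0; rewrite /Pop; under eq_fun do rewrite exprAC.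
by rewrite csum_from_geometric ?norm_qX_lt1 // expr0 mulr1.
Qed.

Lemma Rop_coef f n : (0 < n)%N -> Rop q f n = f n * (q ^+ n / (1 - q ^+ n)).
Proof.
move=> n_gt0; rewrite /Rop; under eq_fun do rewrite exprAC.
by rewrite csum_from_geometric ?norm_qX_lt1 // expr1 mulrA.
Qed.

Lemma Pop_coef0 f : f 0%N = 0 -> Pop q f 0%N = 0.
Proof. by move=> f0; rewrite /Pop f0; under eq_fun do rewrite mul0r; rewrite csum_from0. Qed.

Lemma Rop_coef0 f : f 0%N = 0 -> Rop q f 0%N = 0.
Proof. by move=> f0; rewrite /Rop f0; under eq_fun do rewrite mul0r; rewrite csum_from0. Qed.

Lemma Ppow_coef m f n : (0 < n)%N -> Ppow q m f n = f n / (1 - q ^+ n) ^ m.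
Proof.
move=> n_gt0; case: m => k /=.
  by rewrite (iter_diag_coef (lam := fun n => (1 - q ^+ n)^-1) Pop_coef) // exprVn.
rewrite -/(iter k.+1 (Dop q) f) (iter_diag_coef (lam := fun n => 1 - q ^+ n)) ?invrK //.
by move=> g i _; rewrite /Dop mulrBr mulr1.
Qed.

Lemma Ppow_coef0 m f : f 0%N = 0 -> Ppow q m f 0%N = 0.
Proof.
move=> f0; case: m => k /=; first exact: (iter_diag_coef0 Pop_coef0 _ _ f0).
rewrite -/(iter k.+1 (Dop q) f).
by apply: (iter_diag_coef0 _ _ _ f0) => g g0; rewrite /Dop g0 mul0r subr0.
Qed.

Lemma RPpow_coef s a f n : (0 < n)%N ->
  Rpow q a (Ppow q (s%:Z - a%:Z) f) n = f n * zterm q n s a.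
Proof.
move=> n_gt0; have u_neq0 := onemqX_neq0 n_gt0.
rewrite /Rpow (iter_diag_coef Rop_coef) // Ppow_coef // /zterm.
have -> : (1 - q ^+ n) ^+ s = (1 - q ^+ n) ^ (s%:Z - a%:Z) * (1 - q ^+ n) ^+ a.
  by rewrite -[_ ^+ a]/(_ ^ a%:Z) -expfzDr // subrK.
by rewrite expr_div_n; field; rewrite expf_neq0 ?andbT // expfz_neq0.
Qed.

Lemma RPpow_coef0 s a f : f 0%N = 0 -> Rpow q a (Ppow q (s%:Z - a%:Z) f) 0%N = 0.
Proof. by move=> f0; apply: (iter_diag_coef0 Rop_coef0); exact: Ppow_coef0. Qed.

Lemma Fnest_coef0 s a st : Fnest q ((s, a) :: st) 0%N = 0.
Proof.
apply: RPpow_coef0; case: st => [|sa st] //.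
by rewrite ymul_series seriesEnat /= big_geq.
Qed.

Lemma Fnest_coef s a st n : (0 < n)%N ->
  Fnest q ((s, a) :: st) n = zterm q n s a * zinner q n st.
Proof.
elim: st s a n => [|[s' a'] st IH] s a n n_gt0.
  by rewrite /= RPpow_coef // /yps -lt0n n_gt0 mul1r mulr1.
rewrite -[LHS]/(Rpow q a (Ppow q (s%:Z - a%:Z) (ymul (Fnest q ((s', a') :: st)))) n).
rewrite RPpow_coef // mulrC ymul_series series_drop0 ?Fnest_coef0 // [zinner _ _ _]/=.
by congr (_ * _); apply: eq_big_nat => k /andP[k_gt0 _]; rewrite IH.
Qed.

Lemma zfrak_Fnest s a ts ta :
  zfrak q (a :: ta) (s :: ts) = ps_at1 (Fnest q (zip (s :: ts) (a :: ta))).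
Proof.
rewrite -[LHS]/(csum_from 1 (fun k => zterm q k s a * zinner q k (zip ts ta))).
rewrite /ps_at1 /csum_from -[zip (s :: ts) _]/((s, a) :: zip ts ta).
congr (lim (_ @ \oo)); apply/funext => n.
rewrite -[RHS]/(series _ n) series_drop0 ?Fnest_coef0 //.
by apply: eq_big_nat => k /andP[k_gt0 _]; rewrite Fnest_coef.
Qed.

End Operators.

Section CoefficientBounds.
Context {R : realType}.
Local Notation C := (Cplx R).
Variable q : C.
Hypothesis q_lt1 : `|q| < 1.

Lemma norm_zterm_le k s t : (0 < k)%N ->
  `|zterm q k s t| <= `|q| ^+ (k * t) / (1 - `|q|) ^+ s.
Proof.
move=> k_gt0; rewrite /zterm normrM normfV !normrX -exprM.
apply: ler_wpM2l; first exact: exprn_ge0.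
have onem_gt0 : 0 < 1 - `|q| by rewrite subr_gt0.
have onem_le : 1 - `|q| <= `|1 - q ^+ k|.
  apply: le_trans (lerB_dist _ _); rewrite normr1 normrX lerD2l lerN2.
  by rewrite -[X in _ <= X]expr1 ler_wiXn2l // ltW.
rewrite lef_pV2 ?posrE ?exprn_gt0 //; last exact: lt_le_trans onem_le.
by apply: lerXn2r; rewrite ?nnegrE // ltW.
Qed.

Lemma norm_zinner_le (x : C) st : 1 < x ->
  exists2 K, 0 <= K & forall b, `|zinner q b st| <= K * x ^+ b.
Proof.
move=> x_gt1; have x1_gt0 : 0 < x - 1 by rewrite subr_gt0.
have onem_gt0 : 0 < 1 - `|q| by rewrite subr_gt0.
have geometric_le b : \sum_(1 <= k < b) x ^+ k <= x ^+ b / (x - 1).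
  case: b => [|b]; first by rewrite big_geq // expr0 mul1r invr_ge0 ltW.
  rewrite ler_pdivlMr // mulr_suml (@telescope_sumr_eq _ 1 b.+1 (fun k => x ^+ k)) //.
    by rewrite expr1 gerBl ltW // (lt_trans ltr01 x_gt1).
  by move=> k _; rewrite exprSr; ring.
elim: st => [|[s t] st [K K_ge0 zinner_le]].
  by exists 1 => // b; rewrite normr1 mul1r exprn_ege1 // ltW.
exists (K / ((1 - `|q|) ^+ s * (x - 1))) => [|b].
  by rewrite divr_ge0 // mulr_ge0 ?exprn_ge0 // ltW.
apply: le_trans (ler_norm_sum _ _ _) _.
apply: (@le_trans _ _ (\sum_(1 <= k < b) ((1 - `|q|) ^+ s)^-1 * (K * x ^+ k))).
  apply: ler_sum_nat => k /andP[k_gt0 _]; rewrite normrM.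
  apply: ler_pM; rewrite ?normr_ge0 //.
  apply: le_trans (norm_zterm_le _ _ _ k_gt0) _; rewrite -[X in _ <= X]mul1r.
  apply: ler_wpM2r; first by rewrite invr_ge0 exprn_ge0 // ltW.
  exact: exprn_ile1 (normr_ge0 _) (ltW q_lt1).
rewrite -!mulr_sumr [X in _ <= X](_ : _ = ((1 - `|q|) ^+ s)^-1 * (K * (x ^+ b / (x - 1)))).
  by apply: ler_wpM2l; [rewrite invr_ge0 exprn_ge0 // ltW | exact: ler_wpM2l].
by rewrite invfM; ring.
Qed.

Lemma norm_Fnest_le (x : C) s a st : 1 < x -> (0 < a)%N ->
  exists M, forall k, `|Fnest q ((s, a) :: st) k| <= M * (`|q| * x) ^+ k.
Proof.
move=> x_gt1 a_gt0; have [K K_ge0 zinner_le] := norm_zinner_le x st x_gt1.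
have onem_gt0 : 0 < 1 - `|q| by rewrite subr_gt0.
exists (K / (1 - `|q|) ^+ s) => -[|k].
  by rewrite Fnest_coef0 normr0 expr0 mulr1 divr_ge0 ?exprn_ge0 // ltW.
rewrite Fnest_coef // normrM.
have -> : K / (1 - `|q|) ^+ s * (`|q| * x) ^+ k.+1
          = `|q| ^+ k.+1 / (1 - `|q|) ^+ s * (K * x ^+ k.+1) by rewrite exprMn; ring.
apply: ler_pM; rewrite ?normr_ge0 //.
apply: le_trans (norm_zterm_le _ _ _ (ltn0Sn k)) _.
apply: ler_wpM2r; first by rewrite invr_ge0 exprn_ge0 // ltW.
by rewrite ler_wiXn2l // ?ltW // leq_pmulr.
Qed.

Lemma Fnest_series_cvg s a st : (0 < a)%N ->
  series (Fnest q ((s, a) :: st)) @ \oo --> ps_at1 (Fnest q ((s, a) :: st)).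
Proof.
move=> a_gt0; pose x : C := 2 / (1 + `|q|).
have q1_gt0 : 0 < 1 + `|q| by rewrite ltr_wpDr.
have x_gt1 : 1 < x.
  by rewrite ltr_pdivlMr // mul1r -[2]/(1 + 1) ltrD2l.
have qx_lt1 : `|q| * x < 1.
  by rewrite mulrA ltr_pdivrMr // mul1r mulr_natr mulr2n ltrD2r.
have [M Fnest_le] := norm_Fnest_le x s a st x_gt1 a_gt0.
apply: (series_geometric_dominated_cvgC _ qx_lt1 Fnest_le).
by rewrite mulr_ge0 // ltW // (lt_trans ltr01 x_gt1).
Qed.

End CoefficientBounds.

Theorem theorem6p2 (R : realType) (q : Cplx R) (d : nat) (s a : seq nat) :
  `|q| < 1 ->
  (0 < d)%N -> size s = d -> size a = d ->
  all (fun x => 0 < x)%N s ->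
  (forall j : nat, (0 < j <= d)%N -> (0 < \sum_(i < j) nth 0%N a i)%N) ->
  let F := Fnest q (zip s a) in
  let w := (\sum_(x <- s) x)%N in
  (fun n => \sum_(0 <= k < n) F k) @ \oo --> ps_at1 F /\
  zetaq q a s = (1 - q) ^+ w * ps_at1 F /\
  zfrak q a s = ps_at1 F.
Proof.
move=> q_lt1 d_gt0 size_s size_a _ a_pos.
case: s size_s => [|s1 s'] size_s; first by move: d_gt0; rewrite -size_s.
case: a size_a a_pos => [|a1 a'] size_a a_pos; first by move: d_gt0; rewrite -size_a.
have a1_gt0 : (0 < a1)%N.
  by have := a_pos 1%N; rewrite big_ord1; apply; rewrite -size_s.
move=> F w; have zfrakE : zfrak q (a1 :: a') (s1 :: s') = ps_at1 F by exact: zfrak_Fnest.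
split; first exact: Fnest_series_cvg.
by rewrite /zetaq zfrakE.
Qed.
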